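(* Let $(x_n)$ be a nonincreasing interval-filling sequence of positive reals with cardinal function $f$ such that the strict inequality $r_k>x_k$ holds for exactly one index $k\in\mathbb{N}$. Then $\mathrm{rng}(f)$ equals either $\{1,2,3\}$ or $\{1,2,3,4\}$.
   Context: For a summable sequence $\mathbf{x}=(x_n)$ of positive reals, $\mathcal{A}(\mathbf{x})=\{\sum_{n\in A}x_n: A\subseteq\mathbb{N}\}$ is its achievement set and its cardinal function $f$ assigns to $x\in\mathcal{A}(\mathbf{x})$ the cardinality (a positive integer, $\omega$, or $\mathfrak{c}$) of $\{(\varepsilon_n)\in\{0,1\}^{\mathbb{N}}:\sum\varepsilon_nx_n=x\}$. The sequence is interval-filling if $\mathcal{A}(\mathbf{x})$ is an interval (equivalently $x_n\le r_n$ for all $n$). The tail sums are $r_n=\sum_{k=n+1}^\infty x_k$. *)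

From Stdlib Require Import Reals List.
From Coquelicot Require Import Coquelicot.
Open Scope R_scope.

(* A sequence x_1, x_2, ... is represented by a : nat -> R with a n = x_{n+1}. *)

Definition represents (a : nat -> R) (e : nat -> bool) (s : R) : Prop :=
  is_series (fun n => if e n then a n else 0) s.

Definition achievement_set (a : nat -> R) (s : R) : Prop :=
  exists e : nat -> bool, represents a e s.

(* Tail sums r_n = sum_{k > n} x_k  (in 0-based indexing: sum_{k >= n+1} a k). *)
Definition tail_sum (a : nat -> R) (n : nat) : R :=
  Series (fun k => a (n + 1 + k)%nat).

Definition interval_filling (a : nat -> R) : Prop :=
  forall u v w : R, achievement_set a u -> achievement_set a w ->
    u <= v <= w -> achievement_set a v.

Definition card_fun_eq (a : nat -> R) (s : R) (m : nat) : Prop :=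
  exists l : list (nat -> bool),
    NoDup l /\ length l = m /\ (forall e, In e l <-> represents a e s).

Definition range_card_fun_eq (a : nat -> R) (M : nat -> Prop) : Prop :=
  (forall s, achievement_set a s -> exists m, M m /\ card_fun_eq a s m) /\
  (forall m, M m -> exists s, achievement_set a s /\ card_fun_eq a s m).

(* Let k be the index with r_k > x_k and c = x_(k+1). Every other index has x_j = r_j, so the
   tail after k is geometric, x_(k+1+i) = c / 2^i, and r_k = 2c. If two representations of the same
   sum agree at k and first differ at j, then x_j = r_j forces one of them to be 0 and the other
   1 from j+1 on; consequently among three representations agreeing at k two coincide, and
   f <= 4. The value 0 has one representation and x_(k+2) has two ({k+2} and its tail). For a
   value with three representations: if x_k / c is dyadic, take x_k itself, represented by {k},
   by its finite binary expansion in the tail and by the companion of that expansion;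
   otherwise take a finite tail block x_(k+1) + ... + x_(k+1+N) just above x_k, which has a
   unique representation containing k since two of them would make x_k / c dyadic. *)

From Stdlib Require Import Reals List Lra Lia Classical FunctionalExtensionality Bool ZArith Wf_nat.
From Coquelicot Require Import Coquelicot.
Open Scope R_scope.

Lemma first_difference (x y : nat -> bool) : x <> y ->
  exists j, x j <> y j /\ forall m, (m < j)%nat -> x m = y m.
Proof.
  intros Hxy.
  assert (Hex : exists j, x j <> y j).
  { apply NNPP; intros Hn; apply Hxy, functional_extensionality; intros n.
    apply NNPP; intros Hne; apply Hn; eauto. }
  destruct (dec_inh_nat_subset_has_unique_least_element _ (fun j => classic (x j <> y j)) Hex)
    as [j [[Hj Hmin] _]].
  exists j; split; auto.
  intros m Hm. apply NNPP; intros Hne. specialize (Hmin m Hne). lia.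
Qed.

Lemma last_true (f : nat -> bool) (B : nat) : (exists n, f n = true) ->
  (forall n, f n = true -> (n <= B)%nat) ->
  exists L, f L = true /\ forall n, (L < n)%nat -> f n = false.
Proof.
  intros Hex HB. induction B as [|B IH].
  - destruct Hex as [n Hn]. exists n. split; auto.
    intros m Hm. destruct (f m) eqn:E; auto. apply HB in E. apply HB in Hn. lia.
  - destruct (f (S B)) eqn:E.
    + exists (S B). split; auto. intros n Hn. destruct (f n) eqn:E'; auto. apply HB in E'; lia.
    + apply IH. intros n Hn. destruct (Nat.eq_dec n (S B)) as [->|]; [congruence|].
      apply HB in Hn; lia.
Qed.

Lemma NoDup_length_le_2 {A} (l : list A) : NoDup l ->
  (forall x y z, In x l -> In y l -> In z l -> x = y \/ x = z \/ y = z) -> (length l <= 2)%nat.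
Proof.
  intros Hl H. destruct l as [|x [|y [|z r]]]; simpl; try lia.
  inversion_clear Hl as [|? ? Hx Hyzr]. inversion_clear Hyzr as [|? ? Hy _].
  exfalso. destruct (H x y z) as [<-|[<-|<-]]; simpl; auto;
    [apply Hx|apply Hx|apply Hy]; simpl; auto.
Qed.

Lemma bounded_NoDup_enumeration {A} (P : A -> Prop) (N : nat) :
  (forall l, NoDup l -> (forall x, In x l -> P x) -> (length l <= N)%nat) ->
  exists l, NoDup l /\ forall x, In x l <-> P x.
Proof.
  intros HN.
  assert (Hext : forall d l, NoDup l -> (forall x, In x l -> P x) -> (N - length l <= d)%nat ->
    exists l', NoDup l' /\ forall x, In x l' <-> P x).
  { induction d as [|d IH]; intros l Hl HP Hd.
    all: destruct (classic (forall x, P x -> In x l)) as [Hall|Hmiss];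
      [exists l; split; auto; intros x; split; auto|].
    all: apply not_all_ex_not in Hmiss as [x Hx]; apply imply_to_and in Hx as [Px Hx].
    all: assert (Hl' : NoDup (x :: l)) by (constructor; auto).
    all: assert (HP' : forall y, In y (x :: l) -> P y) by (intros y [<-|Hy]; auto).
    - specialize (HN _ Hl' HP'). simpl in HN. lia.
    - apply (IH (x :: l)); auto. simpl. lia. }
  apply (Hext N nil); [constructor | intros x [] | lia].
Qed.

Definition dyadic (x : R) : Prop := exists (q : Z) (M : nat), x * 2 ^ M = IZR q.

Lemma dyadic_sub (x y : R) : dyadic x -> dyadic y -> dyadic (x - y).
Proof.
  intros [q [M Hq]] [q' [M' Hq']].
  exists (q * 2 ^ Z.of_nat M' - q' * 2 ^ Z.of_nat M)%Z, (M + M')%nat.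
  rewrite minus_IZR, !mult_IZR, <- !pow_IZR, <- Hq, <- Hq', pow_add. ring.
Qed.

Lemma div_pow2_lt (c eps : R) : 0 < c -> 0 < eps -> exists N, c / 2 ^ N < eps.
Proof.
  intros Hc Heps.
  destruct (pow_lt_1_zero (/ 2) ltac:(rewrite Rabs_pos_eq; lra) (eps / c)) as [N HN].
  { apply Rdiv_lt_0_compat; lra. }
  exists N. specialize (HN N (Nat.le_refl N)).
  rewrite Rabs_pos_eq, pow_inv in HN by (apply pow_le; lra).
  apply (Rmult_lt_compat_l c) in HN; auto.
  replace eps with (c * (eps / c)) by (field; lra). exact HN.
Qed.

Section Subsums.

Variable a : nat -> R.
Hypothesis a_pos : forall n, 0 < a n.
Hypothesis a_summable : ex_series a.

Definition subsum (e : nat -> bool) : R := Series (fun n => if e n then a n else 0).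

Lemma ex_series_masked (e : nat -> bool) : ex_series (fun n => if e n then a n else 0).
Proof.
  apply (@ex_series_le R_AbsRing R_CompleteNormedModule _ a); auto.
  intros n. change (norm ?x) with (Rabs x). specialize (a_pos n).
  destruct (e n); rewrite ?Rabs_R0, ?Rabs_pos_eq; lra.
Qed.

Lemma represents_iff (e : nat -> bool) (s : R) : represents a e s <-> subsum e = s.
Proof.
  split; intros H.
  - now apply is_series_unique.
  - rewrite <- H. apply Series_correct, ex_series_masked.
Qed.

Lemma achievement_set_subsum (e : nat -> bool) : achievement_set a (subsum e).
Proof. exists e. now apply represents_iff. Qed.

Lemma subsum_ext (e e' : nat -> bool) : (forall n, e n = e' n) -> subsum e = subsum e'.
Proof. intros H. apply Series_ext. intros n. now rewrite H. Qed.

Lemma subsum_le (e e' : nat -> bool) :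
  (forall n, e n = true -> e' n = true) -> subsum e <= subsum e'.
Proof.
  intros H. apply Series_le; [|apply ex_series_masked].
  intros n. specialize (H n). specialize (a_pos n).
  destruct (e n), (e' n); lra.
Qed.

Lemma subsum_split (e p : nat -> bool) :
  subsum e = subsum (fun n => e n && p n) + subsum (fun n => e n && negb (p n)).
Proof.
  unfold subsum. rewrite <- Series_plus by apply ex_series_masked.
  apply Series_ext. intros n. destruct (e n), (p n); simpl; lra.
Qed.

Lemma subsum_false : subsum (fun _ => false) = 0.
Proof.
  unfold subsum. rewrite (Series_ext _ (fun n => 0 * a n)) by (intros; ring).
  rewrite Series_scal_l. ring.
Qed.

Lemma subsum_ge0 (e : nat -> bool) : 0 <= subsum e.
Proof. rewrite <- subsum_false. apply subsum_le. discriminate. Qed.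

Lemma subsum_single (p : nat) : subsum (fun n => n =? p)%nat = a p.
Proof.
  unfold subsum. rewrite (Series_incr_n_aux _ p).
  2:{ intros m Hm. destruct (Nat.eqb_spec m p); [lia|auto]. }
  rewrite (Series_incr_n _ 1); [|lia|].
  2:{ apply (ex_series_incr_n (fun n => if (n =? p)%nat then a n else 0)), ex_series_masked. }
  rewrite (Series_ext _ (fun n => 0 * a n)), Series_scal_l.
  - simpl. rewrite Nat.add_0_r, Nat.eqb_refl. lra.
  - intros n. rewrite (proj2 (Nat.eqb_neq _ _)) by lia. ring.
Qed.

Lemma subsum_after (j : nat) : subsum (fun n => j <? n)%nat = tail_sum a j.
Proof.
  unfold subsum, tail_sum. rewrite (Series_incr_n_aux _ (j + 1)).
  - apply Series_ext. intros n. destruct (Nat.ltb_spec j (j + 1 + n)); [auto|lia].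
  - intros m Hm. destruct (Nat.ltb_spec j m); [lia|auto].
Qed.

Lemma subsum_ge_single (e : nat -> bool) (p : nat) : e p = true -> a p <= subsum e.
Proof.
  intros H. rewrite <- subsum_single. apply subsum_le.
  intros n Hn. now apply Nat.eqb_eq in Hn as ->.
Qed.

Lemma subsum_eq0 (e : nat -> bool) : subsum e = 0 -> forall n, e n = false.
Proof.
  intros H n. destruct (e n) eqn:E; auto.
  pose proof (subsum_ge_single e n E). specialize (a_pos n). lra.
Qed.

Lemma subsum_split_single (e : nat -> bool) (p : nat) : e p = true ->
  subsum e = a p + subsum (fun n => e n && negb (n =? p))%nat.
Proof.
  intros H. rewrite (subsum_split e (fun n => n =? p)%nat), <- subsum_single.
  f_equal. apply subsum_ext. intros n.
  destruct (Nat.eqb_spec n p) as [->|]; [rewrite H|rewrite andb_false_r]; auto.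
Qed.

Lemma subsum_eq_single (e : nat -> bool) (p : nat) :
  subsum e = a p -> e p = true -> e = (fun n => n =? p)%nat.
Proof.
  intros He Hep. apply functional_extensionality. intros m.
  rewrite (subsum_split_single e p Hep) in He.
  destruct (Nat.eqb_spec m p) as [->|Hmp]; auto.
  pose proof (subsum_eq0 (fun n => e n && negb (n =? p))%nat ltac:(lra) m) as Hm. simpl in Hm.
  now rewrite (proj2 (Nat.eqb_neq m p) Hmp), andb_true_r in Hm.
Qed.

Lemma subsum_decomp_at (e : nat -> bool) (j : nat) :
  subsum e = subsum (fun n => e n && (n <? j))%nat + (if e j then a j else 0)
             + subsum (fun n => e n && (j <? n))%nat.
Proof.
  rewrite (subsum_split e (fun n => n <? j)%nat), Rplus_assoc. f_equal.
  rewrite (subsum_split _ (fun n => n =? j)%nat). f_equal.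
  - destruct (e j) eqn:E.
    + rewrite <- subsum_single. apply subsum_ext. intros n.
      destruct (Nat.eqb_spec n j) as [->|]; [now rewrite E, Nat.ltb_irrefl|].
      now rewrite andb_false_r.
    + rewrite <- subsum_false. apply subsum_ext. intros n.
      destruct (Nat.eqb_spec n j) as [->|]; [now rewrite E|now rewrite andb_false_r].
  - apply subsum_ext. intros n. destruct (e n); auto.
    destruct (Nat.ltb_spec n j), (Nat.eqb_spec n j), (Nat.ltb_spec j n); simpl; auto; lia.
Qed.

Lemma subsum_after_le_tail (e : nat -> bool) (j : nat) :
  subsum (fun n => e n && (j <? n))%nat <= tail_sum a j.
Proof. rewrite <- subsum_after. apply subsum_le. intros n. now rewrite andb_true_iff. Qed.

Lemma tail_sum_succ (j : nat) : tail_sum a j = a (S j) + tail_sum a (S j).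
Proof.
  rewrite <- !subsum_after, (subsum_split_single _ (S j)) by (apply Nat.ltb_lt; lia).
  f_equal. apply subsum_ext. intros n.
  destruct (Nat.eqb_spec n (S j)), (Nat.ltb_spec j n), (Nat.ltb_spec (S j) n); simpl; auto; lia.
Qed.

Lemma subsum_eq_first_difference (x y : nat -> bool) (j : nat) :
  subsum x = subsum y -> (forall m, (m < j)%nat -> x m = y m) -> x j = true -> y j = false ->
  a j = tail_sum a j -> forall m, (j < m)%nat -> x m = false /\ y m = true.
Proof.
  intros Hxy Hbelow Hxj Hyj Hj.
  rewrite (subsum_decomp_at x j), (subsum_decomp_at y j), Hxj, Hyj in Hxy.
  assert (Hprefix : subsum (fun n => x n && (n <? j))%nat = subsum (fun n => y n && (n <? j))%nat).
  { apply subsum_ext. intros n.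
    destruct (Nat.ltb_spec n j); [now rewrite Hbelow | now rewrite !andb_false_r]. }
  pose proof (subsum_ge0 (fun n => x n && (j <? n))%nat) as Hx0.
  pose proof (subsum_after_le_tail y j) as Hy0.
  intros m Hm. split.
  - assert (Hx : subsum (fun n => x n && (j <? n))%nat = 0) by lra.
    pose proof (subsum_eq0 _ Hx m) as Hxm. simpl in Hxm.
    rewrite (proj2 (Nat.ltb_lt _ _) Hm), andb_true_r in Hxm. exact Hxm.
  - destruct (y m) eqn:Hym; auto. exfalso.
    assert (Hle : subsum (fun n => y n && (j <? n))%nat
                  <= subsum (fun n => (j <? n) && negb (n =? m))%nat).
    { apply subsum_le. intros n Hn. apply andb_true_iff in Hn as [Hyn Hjn].
      rewrite Hjn. destruct (Nat.eqb_spec n m) as [->|]; [congruence|auto]. }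
    rewrite <- subsum_after, (subsum_split_single _ m) in Hj by (now apply Nat.ltb_lt).
    specialize (a_pos m). lra.
Qed.

(* Trades the last digit [x_L] of [f] for the tail [x_(L+1) + x_(L+2) + ...]. *)
Definition companion (f : nat -> bool) (L : nat) (n : nat) : bool :=
  if (n <? L)%nat then f n else negb (n =? L)%nat.

Lemma subsum_companion (f : nat -> bool) (L : nat) :
  a L = tail_sum a L -> f L = true -> (forall n, (L < n)%nat -> f n = false) ->
  subsum (companion f L) = subsum f.
Proof.
  intros HL HfL Hafter.
  rewrite (subsum_decomp_at f L), (subsum_decomp_at (companion f L) L), HfL.
  unfold companion at 2. rewrite Nat.ltb_irrefl, Nat.eqb_refl.
  assert (Hprefix : subsum (fun n => companion f L n && (n <? L))%nat
                    = subsum (fun n => f n && (n <? L))%nat).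
  { apply subsum_ext. intros n. unfold companion.
    destruct (n <? L)%nat; [auto | now rewrite !andb_false_r]. }
  assert (Htail : subsum (fun n => companion f L n && (L <? n))%nat = a L).
  { rewrite HL, <- subsum_after. apply subsum_ext. intros n. unfold companion.
    destruct (Nat.ltb_spec n L), (Nat.eqb_spec n L), (Nat.ltb_spec L n); simpl; auto; lia. }
  assert (Hnone : subsum (fun n => f n && (L <? n))%nat = 0).
  { rewrite <- subsum_false. apply subsum_ext. intros n.
    destruct (Nat.ltb_spec L n); [now rewrite Hafter | now rewrite andb_false_r]. }
  simpl. rewrite Hprefix, Htail, Hnone. ring.
Qed.

Lemma card_fun_eq_of_list (s : R) (l : list (nat -> bool)) :
  NoDup l -> (forall e, In e l <-> subsum e = s) -> card_fun_eq a s (length l).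
Proof.
  intros Hl Hiff. exists l. repeat split; auto; intros He.
  - now apply represents_iff, Hiff.
  - now apply Hiff, represents_iff.
Qed.

Section Geometric.

Variable p : nat.
Hypothesis a_geometric : forall i, a (p + i) = a p / 2 ^ i.

Lemma finite_subsum_dyadic (f : nat -> bool) (M : nat) :
  (forall n, f n = true -> (p <= n < p + M)%nat) -> dyadic (subsum f / a p).
Proof.
  intros Hf. specialize (a_pos p) as Hp.
  enough (H : exists q, subsum f * 2 ^ M = a p * IZR q).
  { destruct H as [q Hq]. exists q, M.
    apply (Rmult_eq_reg_l (a p)); [|lra]. rewrite <- Hq. field. lra. }
  revert f Hf. induction M as [|M IH]; intros f Hf.
  - exists 0%Z. rewrite (subsum_ext f (fun _ => false)), subsum_false; [ring|].
    intros n. destruct (f n) eqn:E; auto. apply Hf in E. lia.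
  - set (K := (p + M)%nat).
    assert (HaK : a K * 2 ^ S M = 2 * a p).
    { unfold K. rewrite a_geometric. simpl. field. apply pow_nonzero. lra. }
    destruct (f K) eqn:HfK.
    + destruct (IH (fun n => f n && negb (n =? K))%nat) as [q Hq].
      { intros n Hn. apply andb_true_iff in Hn as [Hn HnK]. apply Hf in Hn.
        apply negb_true_iff, Nat.eqb_neq in HnK. unfold K in HnK. lia. }
      exists (2 * q + 2)%Z. rewrite (subsum_split_single f K HfK), plus_IZR, mult_IZR.
      simpl pow in *. lra.
    + destruct (IH f) as [q Hq].
      { intros n Hn. specialize (Hf n Hn). destruct (Nat.eq_dec n K) as [->|HnK]; [congruence|].
        unfold K in HnK. lia. }
      exists (2 * q)%Z. rewrite mult_IZR. simpl pow. lra.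
Qed.

Lemma binary_expansion (M q : nat) : (q < 2 ^ S M)%nat ->
  exists f, (forall n, f n = true -> (p <= n <= p + M)%nat) /\ subsum f * 2 ^ M = a p * INR q.
Proof.
  revert q. induction M as [|M IH]; intros q Hq.
  - destruct q as [|[|q]]; [| |simpl in Hq; lia].
    + exists (fun _ => false). split; [discriminate|]. rewrite subsum_false. simpl. ring.
    + exists (fun n => n =? p)%nat. split; [intros n Hn; apply Nat.eqb_eq in Hn; lia|].
      rewrite subsum_single. simpl. ring.
  - destruct (IH (q / 2)%nat) as [f [Hf Hfq]].
    { apply Nat.Div0.div_lt_upper_bound. rewrite <- Nat.pow_succ_r'. exact Hq. }
    set (K := (p + S M)%nat).
    assert (HaK : a K * 2 ^ S M = a p).
    { unfold K. rewrite a_geometric. field. apply pow_nonzero. lra. }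
    assert (HfK : f K = false).
    { destruct (f K) eqn:E; auto. apply Hf in E. unfold K in E. lia. }
    assert (Hdiv := Nat.div_mod_eq q 2). assert (Hmod := Nat.mod_upper_bound q 2 ltac:(lia)).
    set (h := (q / 2)%nat) in *.
    destruct (q mod 2) as [|[|r]] eqn:Hr; [| |lia].
    + exists f. split; [intros n Hn; apply Hf in Hn; lia|].
      rewrite Hdiv, Nat.add_0_r, mult_INR. simpl pow. simpl INR. lra.
    + exists (fun n => f n || (n =? K))%nat. split.
      { intros n Hn. apply orb_true_iff in Hn as [Hn|Hn];
          [apply Hf in Hn | apply Nat.eqb_eq in Hn; unfold K in Hn]; lia. }
      rewrite (subsum_split_single _ K) by (now rewrite Nat.eqb_refl, orb_true_r).
      rewrite (subsum_ext _ f).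
      * rewrite Hdiv, plus_INR, mult_INR. simpl pow in *. simpl INR. lra.
      * intros n. destruct (Nat.eqb_spec n K) as [->|]; simpl.
        -- now rewrite HfK.
        -- now rewrite orb_false_r, andb_true_r.
Qed.

End Geometric.

Lemma card_fun_eq_zero : card_fun_eq a 0 1.
Proof.
  apply (card_fun_eq_of_list 0 ((fun _ => false) :: nil)).
  - constructor; [intros []|constructor].
  - intros e. split.
    + intros [<-|[]]. apply subsum_false.
    + intros He. left. apply functional_extensionality. intros n. symmetry. now apply subsum_eq0.
Qed.

Section Nonincreasing.

Hypothesis a_nonincreasing : forall n, a (S n) <= a n.
Hypothesis a_interval_filling : interval_filling a.

Lemma a_antitone (m n : nat) : (m <= n)%nat -> a n <= a m.
Proof. intros H. induction H as [|n H IH]; [lra|]. specialize (a_nonincreasing n). lra. Qed.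

Lemma a_le_tail_sum (j : nat) : a j <= tail_sum a j.
Proof.
  destruct (Rle_or_lt (a j) (tail_sum a j)) as [|Hlt]; auto. exfalso.
  (* A value strictly between [r_j] and [x_j] would be a subsum. *)
  set (v := (tail_sum a j + a j) / 2).
  assert (Htail : 0 <= tail_sum a j) by (rewrite <- subsum_after; apply subsum_ge0).
  assert (Hv : achievement_set a v).
  { apply (a_interval_filling 0 v (subsum (fun _ => true))).
    - rewrite <- subsum_false. apply achievement_set_subsum.
    - apply achievement_set_subsum.
    - pose proof (subsum_ge_single (fun _ => true) j eq_refl). unfold v. lra. }
  destruct Hv as [e He]. apply represents_iff in He.
  destruct (classic (exists m, (m <= j)%nat /\ e m = true)) as [[m [Hmj Hem]]|Hnone].
  - pose proof (subsum_ge_single e m Hem). pose proof (a_antitone m j Hmj). unfold v in He. lra.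
  - assert (Hle : subsum e <= tail_sum a j).
    { rewrite <- subsum_after. apply subsum_le. intros n Hen. apply Nat.ltb_lt.
      destruct (Nat.lt_ge_cases j n) as [|Hnj]; auto. exfalso. eauto. }
    unfold v in He. lra.
Qed.

Lemma representation_through (j : nat) (s : R) :
  a j <= s < 2 * a j -> exists E, subsum E = s /\ E j = true.
Proof.
  intros Hs.
  assert (Hz : achievement_set a (s - a j)).
  { apply (a_interval_filling 0 _ (subsum (fun _ => true))).
    - rewrite <- subsum_false. apply achievement_set_subsum.
    - apply achievement_set_subsum.
    - pose proof (subsum_ge_single (fun _ => true) j eq_refl). lra. }
  destruct Hz as [z Hz]. apply represents_iff in Hz.
  assert (Hzj : z j = false).
  { destruct (z j) eqn:Hzj; auto. pose proof (subsum_ge_single z j Hzj). lra. }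
  exists (fun n => z n || (n =? j)%nat).
  assert (HEj : (z j || (j =? j))%nat = true) by (now rewrite Nat.eqb_refl, orb_true_r).
  split; [|exact HEj].
  rewrite (subsum_split_single _ j HEj), (subsum_ext _ z), Hz; [ring|].
  intros n. destruct (Nat.eqb_spec n j) as [->|]; simpl.
  - now rewrite Hzj.
  - now rewrite orb_false_r, andb_true_r.
Qed.

Section SingleSlowIndex.

Variable k : nat.
Hypothesis tail_sum_eq : forall i, i <> k -> a i = tail_sum a i.

Lemma complementary_after_first_difference (x y : nat -> bool) (j : nat) :
  subsum x = subsum y -> x k = y k -> (forall m, (m < j)%nat -> x m = y m) -> x j <> y j ->
  forall m, (j < m)%nat -> x m = y j /\ y m = x j.
Proof.
  intros Hxy Hk Hbelow Hj m Hm.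
  assert (Hjk : j <> k) by (intros ->; auto).
  destruct (x j) eqn:Hxj, (y j) eqn:Hyj; try congruence.
  - apply (subsum_eq_first_difference x y j); auto.
  - destruct (subsum_eq_first_difference y x j) with (m := m); auto.
    intros m' Hm'. symmetry. auto.
Qed.

Lemma earlier_first_difference_absurd (x y z : nat -> bool) (i j : nat) :
  subsum x = subsum y -> subsum x = subsum z -> x k = y k -> x k = z k ->
  (forall m, (m < j)%nat -> x m = y m) -> x j <> y j ->
  (forall m, (m < i)%nat -> x m = z m) -> x i <> z i -> ~ (i < j)%nat.
Proof.
  intros Hxy Hxz Hky Hkz Hbelow_xy Hxyj Hbelow_xz Hxzi Hij.
  assert (Hyz : forall m, (m < i)%nat -> y m = z m).
  { intros m Hm. rewrite <- Hbelow_xy, Hbelow_xz by lia. reflexivity. }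
  assert (Hyzi : y i <> z i) by (rewrite <- Hbelow_xy by lia; exact Hxzi).
  destruct (complementary_after_first_difference y z i ltac:(congruence) ltac:(congruence)
    Hyz Hyzi j Hij) as [Hyj _].
  destruct (complementary_after_first_difference x z i Hxz Hkz Hbelow_xz Hxzi j Hij) as [Hxj _].
  congruence.
Qed.

Lemma three_representations (x y z : nat -> bool) :
  subsum x = subsum y -> subsum x = subsum z -> x k = y k -> x k = z k ->
  x = y \/ x = z \/ y = z.
Proof.
  intros Hxy Hxz Hky Hkz.
  destruct (classic (x = y)) as [|Hne]; [now left|].
  destruct (classic (x = z)) as [|Hne']; [now right; left|].
  right; right.
  destruct (first_difference x y Hne) as [j [Hxyj Hbelow_xy]].
  destruct (first_difference x z Hne') as [i [Hxzi Hbelow_xz]].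
  assert (Hij : i = j).
  { destruct (Nat.lt_total i j) as [Hij|[Hij|Hij]]; auto; exfalso.
    - eapply (earlier_first_difference_absurd x y z i j); eauto.
    - eapply (earlier_first_difference_absurd x z y j i); eauto. }
  subst i.
  apply functional_extensionality. intros n.
  destruct (Nat.lt_total n j) as [Hn|[->|Hn]].
  - rewrite <- Hbelow_xy, Hbelow_xz; auto.
  - destruct (x j), (y j), (z j); congruence.
  - destruct (complementary_after_first_difference x y j) with (m := n) as [_ Hy]; auto.
    destruct (complementary_after_first_difference x z j) with (m := n) as [_ Hz]; auto.
    congruence.
Qed.

Lemma representations_length_le_4 (s : R) (l : list (nat -> bool)) :
  NoDup l -> (forall e, In e l -> subsum e = s) -> (length l <= 4)%nat.
Proof.
  intros Hl Hs.
  assert (Hclass : forall P : (nat -> bool) -> bool,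
    (forall e e', P e = true -> P e' = true -> e k = e' k) -> (length (filter P l) <= 2)%nat).
  { intros P HP. apply NoDup_length_le_2; [now apply NoDup_filter|].
    intros x y z Hx Hy Hz. apply filter_In in Hx as [Hx Px], Hy as [Hy Py], Hz as [Hz Pz].
    apply three_representations; auto; rewrite ?Hs; auto. }
  rewrite <- (filter_length (fun e => e k) l).
  pose proof (Hclass (fun e => e k)) as Htrue. pose proof (Hclass (fun e => negb (e k))) as Hfalse.
  enough (length (filter (fun e => e k) l) <= 2 /\ length (filter (fun e => negb (e k)) l) <= 2)%nat
    by lia.
  split; [apply Htrue | apply Hfalse]; intros e e' He He'.
  - congruence.
  - apply negb_true_iff in He, He'. congruence.
Qed.

Lemma card_fun_between_1_and_4 (s : R) :
  achievement_set a s -> exists m, (1 <= m <= 4)%nat /\ card_fun_eq a s m.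
Proof.
  intros [e He]. apply represents_iff in He.
  destruct (bounded_NoDup_enumeration (fun e => subsum e = s) 4) as [l [Hl Hiff]].
  { intros l Hl Hs. now apply (representations_length_le_4 s). }
  exists (length l). split; [|now apply card_fun_eq_of_list].
  split.
  - destruct l; [now apply Hiff in He | simpl; lia].
  - apply (representations_length_le_4 s); auto. apply Hiff.
Qed.

Lemma tail_geometric (i : nat) : a (S k + i) = a (S k) / 2 ^ i.
Proof.
  induction i as [|i IH]; [rewrite Nat.add_0_r; simpl; field|].
  assert (Hhalf : a (S k + i) = 2 * a (S k + S i)).
  { rewrite (tail_sum_eq (S k + i)) at 1 by lia.
    rewrite tail_sum_succ, <- Nat.add_succ_r, <- (tail_sum_eq (S k + S i)) by lia. ring. }
  apply (Rmult_eq_reg_l 2); [|lra]. rewrite <- Hhalf, IH. simpl. field. apply pow_nonzero. lra.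
Qed.

Lemma tail_sum_slow : tail_sum a k = 2 * a (S k).
Proof. rewrite tail_sum_succ, <- (tail_sum_eq (S k)) by lia. ring. Qed.

Lemma subsum_tail_block (N : nat) :
  subsum (fun n => (k <? n) && (n <=? S k + N))%nat = 2 * a (S k) - a (S k) / 2 ^ N.
Proof.
  assert (Htail : tail_sum a k
                  = subsum (fun n => (k <? n) && (n <=? S k + N))%nat + tail_sum a (S k + N)).
  { rewrite <- !subsum_after, (subsum_split _ (fun n => n <=? S k + N)%nat). f_equal.
    apply subsum_ext. intros n.
    destruct (Nat.ltb_spec k n), (Nat.leb_spec n (S k + N)), (Nat.ltb_spec (S k + N) n);
      simpl; auto; lia. }
  rewrite tail_sum_slow, <- (tail_sum_eq (S k + N)), tail_geometric in Htail by lia.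
  lra.
Qed.

Lemma small_subsum_avoids_head (e : nat -> bool) (m : nat) :
  subsum e < 2 * a (S k) -> (m < k)%nat -> e m = false.
Proof.
  intros He Hm. destruct (e m) eqn:Hem; auto. exfalso.
  assert (Hpred : a (Nat.pred k) = a k + 2 * a (S k)).
  { rewrite (tail_sum_eq (Nat.pred k)), tail_sum_succ, Nat.succ_pred_pos, tail_sum_slow by lia.
    reflexivity. }
  pose proof (subsum_ge_single e m Hem). pose proof (a_antitone m (Nat.pred k) ltac:(lia)).
  specialize (a_pos k). lra.
Qed.

Lemma card_fun_eq_two : card_fun_eq a (a (S (S k))) 2.
Proof.
  set (p := S (S k)).
  assert (Hdistinct : (fun n => n =? p)%nat <> (fun n => p <? n)%nat).
  { intros H. apply (f_equal (fun e => e p)) in H.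
    rewrite Nat.eqb_refl, Nat.ltb_irrefl in H. discriminate. }
  assert (Hafter : subsum (fun n => p <? n)%nat = a p).
  { rewrite subsum_after. symmetry. apply tail_sum_eq. unfold p. lia. }
  apply (card_fun_eq_of_list _ ((fun n => n =? p)%nat :: (fun n => p <? n)%nat :: nil)).
  - constructor; [intros [H|[]]; auto | constructor; [intros []|constructor]].
  - intros e. split.
    + intros [<-|[<-|[]]]; [apply subsum_single | exact Hafter].
    + intros He.
      assert (Hek : e k = false).
      { destruct (e k) eqn:Hek; auto. exfalso.
        assert (Hhalf : a (S k) = 2 * a p).
        { rewrite (tail_sum_eq (S k)), tail_sum_succ, <- (tail_sum_eq (S (S k))) by (unfold p; lia).
          unfold p. ring. }
        pose proof (subsum_ge_single e k Hek). specialize (a_nonincreasing k).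
        specialize (a_pos p). lra. }
      assert (Hpk : (k =? p)%nat = false) by (apply Nat.eqb_neq; unfold p; lia).
      assert (Hak : (p <? k)%nat = false) by (apply Nat.ltb_ge; unfold p; lia).
      destruct (three_representations e (fun n => n =? p)%nat (fun n => p <? n)%nat)
        as [<-|[<-|Heq]]; simpl; auto; try congruence.
      rewrite subsum_single. congruence.
Qed.

Lemma card_fun_eq_three (s : R) (E f : nat -> bool) (L : nat) :
  subsum E = s -> E k = true -> (forall e, subsum e = s -> e k = true -> e = E) ->
  subsum f = s -> f k = false -> (k < L)%nat -> f L = true ->
  (forall n, (L < n)%nat -> f n = false) -> card_fun_eq a s 3.
Proof.
  intros HE HEk HEunique Hf Hfk HkL HfL Hafter.
  set (g := companion f L).
  assert (Hg : subsum g = s) by (unfold g; rewrite subsum_companion; auto; apply tail_sum_eq; lia).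
  assert (Hgk : g k = false).
  { unfold g, companion. now rewrite (proj2 (Nat.ltb_lt k L) HkL). }
  assert (HgL : g L = false).
  { unfold g, companion. now rewrite Nat.ltb_irrefl, Nat.eqb_refl. }
  apply (card_fun_eq_of_list s (E :: f :: g :: nil)).
  - constructor; [|constructor; [|constructor; [intros []|constructor]]].
    + intros [H|[H|[]]]; [rewrite H in Hfk | rewrite H in Hgk]; congruence.
    + intros [H|[]]. rewrite H in HgL. congruence.
  - intros e. split.
    + intros [<-|[<-|[<-|[]]]]; assumption.
    + intros He. destruct (e k) eqn:Hek.
      * left. symmetry. auto.
      * right. destruct (three_representations e f g) as [<-|[<-|Hfg]]; simpl; auto;
          congruence.
Qed.

Hypothesis slow_index : a k < tail_sum a k.

Lemma a_slow_bounds : a (S k) <= a k < 2 * a (S k).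
Proof. rewrite <- tail_sum_slow. split; [apply a_nonincreasing | exact slow_index]. Qed.

Lemma card_fun_eq_three_dyadic : dyadic (a k / a (S k)) -> card_fun_eq a (a k) 3.
Proof.
  intros [q [M Hq]].
  pose proof a_slow_bounds as Hbounds. pose proof (a_pos (S k)) as Hc.
  assert (HM : 0 < 2 ^ M) by (apply pow_lt; lra).
  assert (Hq0 : (0 <= q)%Z).
  { apply le_IZR. rewrite <- Hq. apply Rmult_le_pos; [apply Rdiv_le_0_compat|]; lra. }
  set (n := Z.to_nat q).
  assert (Hn : INR n = IZR q) by (unfold n; rewrite INR_IZR_INZ, Z2Nat.id; auto).
  assert (Hn2 : (n < 2 ^ S M)%nat).
  { apply INR_lt. rewrite pow_INR, Hn, <- Hq. simpl INR. simpl pow.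
    apply Rmult_lt_compat_r; [exact HM|]. apply Rmult_lt_reg_r with (a (S k)); [exact Hc|].
    unfold Rdiv. rewrite Rmult_assoc, Rinv_l; lra. }
  destruct (binary_expansion (S k) tail_geometric M n Hn2) as [f [Hf Hfq]].
  assert (Hfk : subsum f = a k).
  { apply Rmult_eq_reg_r with (2 ^ M); [|lra]. rewrite Hfq, Hn, <- Hq. field. lra. }
  destruct (last_true f (S k + M)) as [L [HfL Hafter]].
  { apply NNPP. intros Hnone. assert (Hzero : subsum f = subsum (fun _ => false)).
    { apply subsum_ext. intros m. destruct (f m) eqn:Hm; [exfalso; eauto | reflexivity]. }
    rewrite subsum_false in Hzero. specialize (a_pos k). lra. }
  { intros m Hm. now apply Hf. }
  apply (card_fun_eq_three (a k) (fun n => n =? k)%nat f L).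
  - apply subsum_single.
  - apply Nat.eqb_refl.
  - intros e He Hek. now apply subsum_eq_single.
  - exact Hfk.
  - destruct (f k) eqn:Hk; auto. apply Hf in Hk. lia.
  - apply Hf in HfL. lia.
  - exact HfL.
  - exact Hafter.
Qed.

Lemma finite_representation_through_k_dyadic (s : R) (w : nat -> bool) (j : nat) :
  s < 2 * a (S k) -> subsum w = s -> w k = true -> (forall m, (j < m)%nat -> w m = false) ->
  dyadic ((s - a k) / a (S k)).
Proof.
  intros Hs Hw Hwk Hafter.
  rewrite (subsum_split_single w k Hwk) in Hw.
  replace (s - a k) with (subsum (fun n => w n && negb (n =? k))%nat) by lra.
  apply (finite_subsum_dyadic (S k) tail_geometric _ (j - k)).
  intros n Hn. apply andb_true_iff in Hn as [Hwn Hnk]. apply negb_true_iff, Nat.eqb_neq in Hnk.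
  assert (~ (n < k)%nat).
  { intros Hnk'. rewrite (small_subsum_avoids_head w n) in Hwn; [discriminate| |exact Hnk'].
    rewrite subsum_split_single with (p := k); auto. lra. }
  assert (~ (j < n)%nat) by (intros Hjn; rewrite Hafter in Hwn; [discriminate|exact Hjn]).
  lia.
Qed.

Lemma representation_through_k_unique (s : R) (e e' : nat -> bool) :
  ~ dyadic (a k / a (S k)) -> dyadic (s / a (S k)) -> s < 2 * a (S k) ->
  subsum e = s -> subsum e' = s -> e k = true -> e' k = true -> e = e'.
Proof.
  intros Hnd Hs Hs2 He He' Hek He'k. apply NNPP. intros Hne.
  destruct (first_difference e e' Hne) as [j [Hj Hbelow]].
  assert (Hkj : (k < j)%nat).
  { destruct (Nat.lt_total j k) as [Hjk|[->|]]; auto; [|congruence].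
    rewrite (small_subsum_avoids_head e j), (small_subsum_avoids_head e' j) in Hj; auto; lra. }
  pose proof (complementary_after_first_difference e e' j ltac:(congruence) ltac:(congruence)
    Hbelow Hj) as Hafter.
  apply Hnd. replace (a k / a (S k)) with (s / a (S k) - (s - a k) / a (S k))
    by (field; specialize (a_pos (S k)); lra).
  apply dyadic_sub; auto.
  destruct (e j) eqn:Hej.
  - apply (finite_representation_through_k_dyadic s e j); auto.
    intros m Hm. destruct (Hafter m Hm). destruct (e' j); congruence.
  - apply (finite_representation_through_k_dyadic s e' j); auto.
    intros m Hm. destruct (Hafter m Hm). congruence.
Qed.

Lemma card_fun_eq_three_nondyadic :
  ~ dyadic (a k / a (S k)) -> exists s, achievement_set a s /\ card_fun_eq a s 3.
Proof.
  intros Hnd.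
  pose proof a_slow_bounds as Hbounds. pose proof (a_pos (S k)) as Hc.
  destruct (div_pow2_lt (a (S k)) (2 * a (S k) - a k) Hc ltac:(lra)) as [N HN].
  assert (HpowN : 0 < 2 ^ N) by (apply pow_lt; lra).
  assert (Hlast : 0 < a (S k) / 2 ^ N) by (apply Rdiv_lt_0_compat; lra).
  set (K := (S k + N)%nat).
  set (F := fun n => ((k <? n) && (n <=? K))%nat).
  pose proof (subsum_tail_block N) as HF. fold K F in HF.
  set (s := subsum F) in *.
  destruct (representation_through k s ltac:(lra)) as [E [HE HEk]].
  assert (Hdyadic : dyadic (s / a (S k))).
  { exists (2 * 2 ^ Z.of_nat N - 1)%Z, N.
    rewrite minus_IZR, mult_IZR, <- pow_IZR, HF. field. lra. }
  exists s. split; [apply achievement_set_subsum|].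
  apply (card_fun_eq_three s E F K); auto.
  - intros e He Hek. apply (representation_through_k_unique s); auto. lra.
  - unfold F. now rewrite Nat.ltb_irrefl.
  - unfold K. lia.
  - unfold F. apply andb_true_iff. split; [apply Nat.ltb_lt | apply Nat.leb_le]; unfold K; lia.
  - intros n Hn. unfold F. rewrite (proj2 (Nat.leb_gt n K) Hn). apply andb_false_r.
Qed.

Lemma card_fun_three_attained : exists s, achievement_set a s /\ card_fun_eq a s 3.
Proof.
  destruct (classic (dyadic (a k / a (S k)))) as [Hd|Hnd].
  - exists (a k). split; [rewrite <- subsum_single; apply achievement_set_subsum|].
    now apply card_fun_eq_three_dyadic.
  - now apply card_fun_eq_three_nondyadic.
Qed.

End SingleSlowIndex.

End Nonincreasing.

End Subsums.

Theorem theorem4p9 (a : nat -> R) :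
  (forall n, 0 < a n) ->
  ex_series a ->
  (forall n, a (S n) <= a n) ->
  interval_filling a ->
  (exists k, tail_sum a k > a k /\ forall j, tail_sum a j > a j -> j = k) ->
  range_card_fun_eq a (fun m => m = 1%nat \/ m = 2%nat \/ m = 3%nat) \/
  range_card_fun_eq a (fun m => m = 1%nat \/ m = 2%nat \/ m = 3%nat \/ m = 4%nat).
Proof.
  intros Hpos Hsum Hmono Hfill [k [Hk Hunique]].
  assert (Heq : forall i, i <> k -> a i = tail_sum a i).
  { intros i Hi. destruct (Rle_lt_or_eq_dec _ _ (a_le_tail_sum a Hpos Hsum Hmono Hfill i)); auto.
    exfalso. apply Hi, Hunique. lra. }
  assert (Hlow : forall m, (1 <= m <= 3)%nat -> exists s, achievement_set a s /\ card_fun_eq a s m).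
  { intros m Hm. destruct m as [|[|[|[|m]]]]; try lia.
    - exists 0. split; [|now apply card_fun_eq_zero].
      rewrite <- (subsum_false a). apply (achievement_set_subsum a Hpos Hsum).
    - exists (a (S (S k))). split; [|now apply card_fun_eq_two].
      rewrite <- (subsum_single a Hpos Hsum). apply (achievement_set_subsum a Hpos Hsum).
    - now apply (card_fun_three_attained a Hpos Hsum Hmono Hfill k). }
  pose proof (card_fun_between_1_and_4 a Hpos Hsum k Heq) as Hbound.
  destruct (classic (exists s, achievement_set a s /\ card_fun_eq a s 4)) as [H4|H4];
    [right|left]; split.
  - intros s Hs. destruct (Hbound s Hs) as [m [Hm Hcard]]. exists m. split; auto. lia.
  - intros m Hm. destruct (Nat.eq_dec m 4) as [->|]; auto. apply Hlow. lia.
  - intros s Hs. destruct (Hbound s Hs) as [m [Hm Hcard]]. exists m. split; auto.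
    destruct (Nat.eq_dec m 4) as [->|]; [exfalso; eauto | lia].
  - intros m Hm. apply Hlow. lia.
Qed.
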